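(* Let $z_1,z_2,\dots$ be a stationary finite-state Markov chain with stationary distribution $\mu$, and for $w\in\mathcal{K}$ and $N\in\mathbb{N}$ let $g^N(w)=\frac1N\sum_{i=1}^N\nabla f(w;z_i)$. Suppose $\|\nabla f(w;z)\|\le G$ for all $w\in\mathcal{K}$, $z\in\Omega$. Let $K\in\{1,\dots,N\}$ and $n=\lfloor N/K\rfloor$. Then for every $\delta>K(n-1)d_{\mathrm{mix}}(K)$ and every fixed $w\in\mathcal{K}$ (not depending on the chain), with probability at least $1-\delta$, \[ \|g^N(w)-\nabla F(w)\|\le\frac{6G}{\sqrt n}\Big(1+\sqrt{\log(K/\delta')}\Big)+\frac{2GK}{N}, \] where $\delta'=\delta-K(n-1)d_{\mathrm{mix}}(K)$.
   Context: $\Omega$ is the finite state space; $\mathcal{K}\subseteq\mathbb{R}^d$; $f(\cdot;z)$ is differentiable for each $z\in\Omega$ and $F(w)=\mathbb{E}_{z\sim\mu}[f(w;z)]$. For probability measures $P,Q$ on $\Omega$, $\|P-Q\|_{TV}=\sup_A|P(A)-Q(A)|$; $P^s(z,\cdot)$ denotes the law of $z_{s+1}$ given $z_1=z$, and $d_{\mathrm{mix}}(s)=\sup_{z\in\Omega}\|P^s(z,\cdot)-\mu\|_{TV}$. $\log$ is the natural logarithm. *)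

From HB Require Import structures.
From mathcomp Require Import all_boot all_order all_algebra.
From mathcomp Require Import all_classical all_reals all_analysis.
Set Implicit Arguments. Unset Strict Implicit. Unset Printing Implicit Defensive.
Import Order.TTheory GRing.Theory Num.Theory.
Import numFieldNormedType.Exports.
Local Open Scope ring_scope.

Section Defs.
Variable R : realType.

Definition enorm (d : nat) (v : 'rV[R]_d) : R :=
  Num.sqrt (\sum_(i < d) (v ord0 i) ^+ 2).

Definition grad (d : nat) (h : 'rV[R]_d -> R) (w : 'rV[R]_d) : 'rV[R]_d :=
  \row_(i < d) 'D_(delta_mx ord0 i) h w.

Variable Omega : finType.

Definition tv_dist (p q : Omega -> R) : R :=
  \big[Num.max/0]_(A : {set Omega}) `|\sum_(x in A) (p x - q x)|.

(* s-step transition kernel: Pn P s z y = P(z_{s+1} = y | z_1 = z). *)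
Fixpoint Pn (P : Omega -> Omega -> R) (s : nat) : Omega -> Omega -> R :=
  match s with
  | 0 => fun z y => if z == y then 1 else 0
  | s'.+1 => fun z y => \sum_(x : Omega) Pn P s' z x * P x y
  end.

Definition dmix (P : Omega -> Omega -> R) (mu : Omega -> R) (s : nat) : R :=
  \big[Num.max/0]_(z : Omega) tv_dist (Pn P s z) mu.

Definition is_distribution (mu : Omega -> R) : Prop :=
  (forall z, 0 <= mu z) /\ \sum_(z : Omega) mu z = 1.

Definition is_stochastic (P : Omega -> Omega -> R) : Prop :=
  (forall z y, 0 <= P z y) /\ (forall z, \sum_(y : Omega) P z y = 1).

Definition is_stationary (P : Omega -> Omega -> R) (mu : Omega -> R) : Prop :=
  forall y, \sum_(z : Omega) mu z * P z y = mu y.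

Fixpoint chainw (P : Omega -> Omega -> R) (z : Omega) (s : seq Omega) : R :=
  match s with
  | [::] => 1
  | y :: s' => P z y * chainw P y s'
  end.

Definition pathw (P : Omega -> Omega -> R) (mu : Omega -> R) (s : seq Omega) : R :=
  match s with
  | [::] => 1
  | z :: s' => mu z * chainw P z s'
  end.

Definition chain_prob (P : Omega -> Omega -> R) (mu : Omega -> R) (N : nat)
  (E : N.-tuple Omega -> bool) : R :=
  \sum_(x : N.-tuple Omega | E x) pathw P mu x.

End Defs.

From HB Require Import structures.
From mathcomp Require Import all_boot all_order all_algebra.
From mathcomp Require Import all_classical all_reals all_analysis.
From mathcomp Require Import ring lra zify.
Import Order.TTheory GRing.Theory Num.Theory.
Import numFieldNormedType.Exports.
Local Open Scope ring_scope.
Set Implicit Arguments. Unset Strict Implicit. Unset Printing Implicit Defensive.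

(* Split the trajectory z_1, ..., z_N into the K interleaved subsequences
   z_j, z_(j+K), z_(j+2K), ... of length n = N / K, plus fewer than K leftover
   terms.  Along one subsequence consecutive samples are K steps apart, and
   replacing a transition kernel P^K(z, .) by mu changes the probability of an
   event by at most d_mix(K); after n - 1 such replacements the subsequence is
   i.i.d. from mu.  For i.i.d. centred vectors whose differences have norm at
   most c = 2G, the norm of their sum has mean at most c sqrt n and bounded
   differences c, so by McDiarmid's inequality it exceeds c sqrt n (1 + 3 r)
   with probability at most exp(-r^2).  Taking exp(-r^2) = delta' / K, the union
   bound over the K subsequences fails with probability at most
   K (delta' / K + (n - 1) d_mix(K)) = delta. *)

Section EuclideanNorm.
Variables (R : realType) (d : nat).
Implicit Types u v : 'rV[R]_d.

Definition dot u v : R := \sum_i u ord0 i * v ord0 i.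

Lemma dotC u v : dot u v = dot v u.
Proof. by apply: eq_bigr => i _; rewrite mulrC. Qed.

Lemma dotDl u1 u2 v : dot (u1 + u2) v = dot u1 v + dot u2 v.
Proof. by rewrite /dot -big_split; apply: eq_bigr => i _; rewrite mxE mulrDl. Qed.

Lemma dot0l v : dot 0 v = 0.
Proof. by rewrite /dot big1 // => i _; rewrite mxE mul0r. Qed.

Lemma dot_suml (I : Type) (r : seq I) (F : I -> 'rV[R]_d) v :
  dot (\sum_(i <- r) F i) v = \sum_(i <- r) dot (F i) v.
Proof.
elim: r => [|a r IH]; first by rewrite !big_nil dot0l.
by rewrite !big_cons dotDl IH.
Qed.

Lemma dotZl a u v : dot (a *: u) v = a * dot u v.
Proof. by rewrite /dot big_distrr; apply: eq_bigr => i _; rewrite mxE /= mulrA. Qed.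

Lemma dotDr u v1 v2 : dot u (v1 + v2) = dot u v1 + dot u v2.
Proof. by rewrite dotC dotDl !(dotC u). Qed.

Lemma dotZr a u v : dot u (a *: v) = a * dot u v.
Proof. by rewrite dotC dotZl dotC. Qed.

Lemma dot_ge0 u : 0 <= dot u u.
Proof. by apply: sumr_ge0 => i _; rewrite -expr2 sqr_ge0. Qed.

Lemma dot_self_eq0 u v : dot u u = 0 -> dot u v = 0.
Proof.
move/eqP; rewrite psumr_eq0 => [/allP u0|i _]; last by rewrite -expr2 sqr_ge0.
rewrite /dot big1 // => i _.
have /implyP/(_ isT) := u0 i (mem_index_enum _).
by rewrite mulf_eq0 orbb => /eqP ->; rewrite mul0r.
Qed.

Lemma enorm_ge0 u : 0 <= enorm u.
Proof. exact: sqrtr_ge0. Qed.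

Lemma enormE u : enorm u = Num.sqrt (dot u u).
Proof. by congr Num.sqrt; apply: eq_bigr => i _; rewrite expr2. Qed.

Lemma enorm_sqr u : enorm u ^+ 2 = dot u u.
Proof. by rewrite enormE sqr_sqrtr // dot_ge0. Qed.

Lemma dot_le_enorm u v : dot u v <= enorm u * enorm v.
Proof.
have [AB0|AB_neq0] := eqVneq (enorm u * enorm v) 0.
  rewrite AB0; move/eqP: AB0; rewrite mulf_eq0 => /orP[] /eqP e0.
    by rewrite dot_self_eq0 // -enorm_sqr e0 expr0n.
  by rewrite dotC dot_self_eq0 // -enorm_sqr e0 expr0n.
have AB_gt0 : 0 < enorm u * enorm v by rewrite lt0r AB_neq0 mulr_ge0 ?enorm_ge0.
rewrite -subr_ge0 -(pmulr_rge0 _ AB_gt0).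
have := dot_ge0 (enorm v *: u - enorm u *: v).
rewrite !dotDl !dotDr -!scaleNr !dotZl !dotZr (dotC v u) -!enorm_sqr.
by nra.
Qed.

Lemma ler_enormD u v : enorm (u + v) <= enorm u + enorm v.
Proof.
have uv_ge0 : 0 <= enorm u + enorm v by rewrite addr_ge0 ?enorm_ge0.
rewrite -(ger0_norm uv_ge0) -sqrtr_sqr enormE ler_sqrt ?sqr_ge0 //.
rewrite dotDl !dotDr (dotC v u) sqrrD -!enorm_sqr.
by have := dot_le_enorm u v; lra.
Qed.

Lemma enormZ a u : enorm (a *: u) = `|a| * enorm u.
Proof. by rewrite !enormE dotZl dotZr mulrA -expr2 sqrtrM ?sqr_ge0 // sqrtr_sqr. Qed.

Lemma enormN u : enorm (- u) = enorm u.
Proof. by rewrite -scaleN1r enormZ normrN normr1 mul1r. Qed.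

Lemma norm_enormB u v : `|enorm u - enorm v| <= enorm (u - v).
Proof.
rewrite ler_norml; apply/andP; split.
  have -> : enorm (u - v) = enorm (v - u) by rewrite -enormN opprB.
  by have := ler_enormD (v - u) u; rewrite subrK; lra.
by have := ler_enormD (u - v) v; rewrite subrK; lra.
Qed.

Lemma ler_enorm_sum (I : Type) (r : seq I) (F : I -> 'rV[R]_d) :
  enorm (\sum_(i <- r) F i) <= \sum_(i <- r) enorm (F i).
Proof.
elim: r => [|a r IH]; last by rewrite !big_cons (le_trans (ler_enormD _ _)) ?lerD2l.
by rewrite !big_nil /enorm big1 ?sqrtr0 // => i _; rewrite mxE expr0n.
Qed.

End EuclideanNorm.

Lemma grad_sum_mul (R : realType) (Omega : finType) (d : nat)
    (f : 'rV[R]_d -> Omega -> R) (mu : Omega -> R) (w : 'rV[R]_d) :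
  (forall z x, differentiable (fun v => f v z) x) ->
  grad (fun v => \sum_z mu z * f v z) w = \sum_z mu z *: grad (fun u => f u z) w.
Proof.
move=> f_diff; apply/rowP => i; rewrite !mxE summxE.
under [RHS]eq_bigr do rewrite !mxE.
set e := delta_mx ord0 i.
suff der_sum (r : seq Omega) : is_derive w e (fun v => \sum_(z <- r) mu z * f v z)
    (\sum_(z <- r) mu z * 'D_e (fun u => f u z) w) by exact: derive_val.
elim: r => [|a r IH].
  under eq_fun do rewrite big_nil.
  by rewrite big_nil; exact: is_derive_cst.
under eq_fun do rewrite big_cons.
rewrite big_cons; apply: is_deriveD => //.
by apply: is_deriveZ; apply/derivableP/diff_derivable.
Qed.

Lemma expR_le_1Dx_sqr (R : realType) (x : R) :
  `|x| <= 1 -> expR x <= 1 + x + 2 * x ^+ 2.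
Proof.
(* With [y = x / 2], [1 - y <= expR (- y)] gives
   [expR x <= (1 - y) ^- 2 <= 1 + x + 2 x ^+ 2]. *)
move=> x_le1; set y := x / 2.
have x_2y : x = y + y by rewrite /y; field.
have y_bnd : - 2^-1 <= y <= 2^-1.
  by move: x_le1; rewrite ler_norml x_2y => /andP[? ?]; apply/andP; split; lra.
have ey_ge0 : 0 <= expR y * (1 - y) by rewrite mulr_ge0 ?expR_ge0 //; lra.
have ey_le1 : expR y * (1 - y) <= 1.
  rewrite -[X in _ <= X](expRxMexpNx_1 y) ler_wpM2l ?expR_ge0 //.
  by have := expR_ge1Dx (- y); rewrite addrC.
have ex_le1 : expR x * (1 - y) ^+ 2 <= 1.
  have -> : expR x * (1 - y) ^+ 2 = (expR y * (1 - y)) ^+ 2 by rewrite x_2y expRD; ring.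
  by rewrite exprn_ile1.
have quad_ge1 : 1 <= (1 - y) ^+ 2 * (1 + x + 2 * x ^+ 2).
  have -> : (1 - y) ^+ 2 * (1 + x + 2 * x ^+ 2) = 1 + y ^+ 2 * ((1 - 2 * y) * (5 - 4 * y)).
    by rewrite x_2y; ring.
  by rewrite lerDl mulr_ge0 ?sqr_ge0 // mulr_ge0; lra.
have := expR_ge0 x; have := sqr_ge0 (1 - y); nra.
Qed.

Lemma expRN_sqr_sqrt_ln_le (R : realType) (a b : R) : 0 < a -> 0 < b ->
  expR (- Num.sqrt (ln (b / a)) ^+ 2) <= a / b.
Proof.
move=> a_gt0 b_gt0; have [ln_ge0 | ln_lt0] := lerP 0 (ln (b / a)).
  by rewrite sqr_sqrtr // expRN lnK ?posrE ?divr_gt0 // invf_div.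
rewrite ltr0_sqrtr // expr0n /= oppr0 expR0 ler_pdivlMr // mul1r.
have : ~~ (1 <= b / a) by apply: contraTN ln_lt0 => ba_ge1; rewrite -leNgt ln_ge0.
by rewrite -ltNge ltr_pdivrMr // mul1r => /ltW.
Qed.

Lemma block_average_le (R : realType) (c r : R) (N K n : nat) :
  0 <= c -> 0 <= r -> (0 < n)%N -> (n * K <= N < n.+1 * K)%N ->
  N%:R^-1 * (K%:R * (c * Num.sqrt n%:R * (1 + 3 * r)) + (N - n * K)%:R * c)
  <= 3 * c / Num.sqrt n%:R * (1 + r) + c * K%:R / N%:R.
Proof.
move=> c_ge0 r_ge0 n_gt0 /andP[nKN NnK].
have N_gt0 : 0 < N%:R :> R by rewrite ltr0n; nia.
set q := Num.sqrt n%:R; have q_gt0 : 0 < q by rewrite sqrtr_gt0 ltr0n.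
have qq : q ^+ 2 = n%:R by rewrite sqr_sqrtr // ler0n.
rewrite mulrDr lerD //.
  have KqN : K%:R * q ^+ 2 / N%:R <= 1.
    by rewrite ler_pdivrMr // mul1r qq -natrM ler_nat mulnC.
  have cq_ge0 : 0 <= c / q by rewrite divr_ge0 // ltW.
  have -> : N%:R^-1 * (K%:R * (c * q * (1 + 3 * r))) =
            K%:R * q ^+ 2 / N%:R * (c / q * (1 + 3 * r)).
    by field; rewrite !gt_eqF.
  have fac_ge0 : 0 <= c / q * (1 + 3 * r) by rewrite mulr_ge0 //; lra.
  by rewrite (le_trans (ler_wpM2r fac_ge0 KqN)) // mul1r; lra.
rewrite (_ : c * K%:R / N%:R = N%:R^-1 * (K%:R * c)); last by rewrite mulrC (mulrC c).
apply: ler_wpM2l; first by rewrite invr_ge0 ltW.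
by apply: ler_wpM2r => //; rewrite ler_nat; move: NnK; rewrite mulSn; lia.
Qed.

(** * Expectations along a Markov chain *)

Lemma big_tuple_cons (V : nmodType) (T : finType) n (F : n.+1.-tuple T -> V) :
  \sum_t F t = \sum_a \sum_(t : n.-tuple T) F [tuple of a :: t].
Proof.
rewrite pair_bigA /= (reindex (fun p : T * n.-tuple T => [tuple of p.1 :: p.2])) //=.
exists (fun t => (thead t, behead_tuple t)) => [[a t] _ | t _] /=.
  by congr pair; apply: val_inj.
by case/tupleP: t => a t; apply: val_inj.
Qed.

Lemma big_tuple0 (V : nmodType) (T : finType) (F : 0.-tuple T -> V) :
  \sum_t F t = F [tuple].
Proof. by rewrite (big_pred1 [tuple]) // => t; apply/esym/eqP; exact: tuple0. Qed.

Lemma big_nat_mul_blocks (V : nmodType) (F : nat -> V) n K :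
  \sum_(0 <= i < n * K) F i = \sum_(j < K) \sum_(i < n) F (j + i * K)%N.
Proof.
elim: n => [|n IH]; first by rewrite mul0n big_geq // big1 // => j _; rewrite big_ord0.
rewrite mulSnr (big_cat_nat _ (leq_addr _ _)) //= IH.
rewrite -[X in \sum_(X <= _ < _) _]add0n big_addn addKn big_mkord -big_split /=.
by apply: eq_bigr => j _; rewrite big_ord_recr /= addnC.
Qed.

Lemma distribution_inhabited (R : realType) (Omega : finType) (mu : Omega -> R) :
  is_distribution mu -> inhabited Omega.
Proof.
case=> _ mu_sum1; case: (pickP (fun _ : Omega => true)) => [x0 _ | Omega0].
  exact: inhabits x0.
by move: mu_sum1; rewrite big_pred0 // => /eqP; rewrite eq_sym oner_eq0.
Qed.

Section MarkovChain.
Variables (R : realType) (Omega : finType) (P : Omega -> Omega -> R) (mu : Omega -> R).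
Hypotheses (P_stoch : is_stochastic P) (mu_distr : is_distribution mu).
Hypothesis mu_stat : is_stationary P mu.
Implicit Types (h : seq Omega -> R) (z : Omega).

Lemma sum_mu_mul c : \sum_a mu a * c = c.
Proof. by rewrite -big_distrl /= mu_distr.2 mul1r. Qed.

(* [chainE n z h]: expectation of [h (z_2, ..., z_(n+1))] given [z_1 = z];
   [statE n h]: expectation of [h (z_1, ..., z_n)] for the stationary chain;
   [iidE n h]: expectation of [h] under the product measure [mu^n]. *)
Fixpoint chainE n z h : R :=
  if n is n'.+1 then \sum_a P z a * chainE n' a (fun s => h (a :: s)) else h [::].

Definition statE n h : R :=
  if n is n'.+1 then \sum_a mu a * chainE n' a (fun s => h (a :: s)) else h [::].

Fixpoint iidE n h : R :=
  if n is n'.+1 then \sum_a mu a * iidE n' (fun s => h (a :: s)) else h [::].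

Lemma sum_chainw_chainE n z h :
  \sum_(t : n.-tuple Omega) chainw P z t * h t = chainE n z h.
Proof.
elim: n z h => [|n IH] z h /=.
  by rewrite big_tuple0 /= mul1r.
rewrite big_tuple_cons; apply: eq_bigr => a _.
by rewrite -IH big_distrr; apply: eq_bigr => t _; rewrite /= mulrA.
Qed.

Lemma sum_pathw_statE n h :
  \sum_(t : n.-tuple Omega) pathw P mu t * h t = statE n h.
Proof.
case: n h => [|n] h /=; first by rewrite big_tuple0 /= mul1r.
rewrite big_tuple_cons; apply: eq_bigr => a _.
by rewrite -sum_chainw_chainE big_distrr; apply: eq_bigr => t _; rewrite /= mulrA.
Qed.

Lemma eq_chainE n z h1 h2 :
  (forall s, size s = n -> h1 s = h2 s) -> chainE n z h1 = chainE n z h2.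
Proof.
elim: n z h1 h2 => [|n IH] z h1 h2 eq_h /=; first exact: eq_h.
by apply: eq_bigr => a _; congr (_ * _); apply: IH => s s_n; apply: eq_h => /=; rewrite s_n.
Qed.

Lemma chainE_cst n z c : chainE n z (fun _ => c) = c.
Proof.
elim: n z => [|n IH] z //=.
by under eq_bigr do rewrite IH; rewrite -big_distrl /= P_stoch.2 mul1r.
Qed.

Lemma chainE_cat m n z h :
  chainE (m + n) z h = chainE m z (fun u => chainE n (last z u) (fun v => h (u ++ v))).
Proof. by elim: m z h => [|m IH] z h //=; apply: eq_bigr => a _; rewrite IH. Qed.

Lemma chainE_last n z (phi : Omega -> R) :
  chainE n z (fun u => phi (last z u)) = \sum_y Pn P n z y * phi y.
Proof.
elim: n z phi => [|n IH] z phi.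
  rewrite /= (bigD1 z) //= eqxx mul1r big1 ?addr0 // => y /negbTE.
  by rewrite eq_sym => ->; rewrite mul0r.
pose Pphi y := \sum_a P y a * phi a.
rewrite -addn1 chainE_cat (eq_chainE _ (h2 := fun u => Pphi (last z u))); last first.
  by move=> s _; apply: eq_bigr => a _; rewrite cats1 last_rcons.
rewrite IH addn1 /= /Pphi.
under [RHS]eq_bigr do rewrite big_distrl /=.
rewrite exchange_big; apply: eq_bigr => x _; rewrite big_distrr.
by apply: eq_bigr => y _; rewrite /= mulrA.
Qed.

Lemma statE_cst n c : statE n (fun _ => c) = c.
Proof. by case: n => [|n] //=; under eq_bigr do rewrite chainE_cst; rewrite sum_mu_mul. Qed.

Lemma statE_behead n h : statE n.+1 (fun s => h (behead s)) = statE n h.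
Proof.
case: n h => [|n] h /=; first by rewrite sum_mu_mul.
under eq_bigr do rewrite big_distrr /=.
rewrite exchange_big /=; apply: eq_bigr => b _.
by under eq_bigr do rewrite mulrA; rewrite -big_distrl /= mu_stat.
Qed.

Lemma statE_drop j n h : statE (j + n) (fun s => h (drop j s)) = statE n h.
Proof.
elim: j h => [|j IH] h; first by under eq_fun do rewrite drop0.
rewrite addSn -(IH h) -(statE_behead (j + n)).
by congr statE; apply: funext => -[].
Qed.

Lemma pathw_ge0 s : 0 <= pathw P mu s.
Proof.
have chainw_ge0 z t : 0 <= chainw P z t.
  by elim: t z => [|y t IH] z //=; rewrite mulr_ge0 ?P_stoch.1.
by case: s => [|z s] //=; rewrite mulr_ge0 ?mu_distr.1.
Qed.

Lemma sum_pathw N : \sum_(x : N.-tuple Omega) pathw P mu x = 1.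
Proof.
by rewrite -(statE_cst N 1) -sum_pathw_statE; apply: eq_bigr => x _; rewrite mulr1.
Qed.

Lemma chain_probE N (E : pred (N.-tuple Omega)) :
  chain_prob P mu E = \sum_(x : N.-tuple Omega) pathw P mu x * (E x)%:R.
Proof.
rewrite /chain_prob big_mkcond; apply: eq_bigr => x _.
by case: (E x); rewrite ?mulr1 ?mulr0.
Qed.

Lemma le_chain_prob N (E1 E2 : pred (N.-tuple Omega)) :
  (forall x, E1 x -> E2 x) -> chain_prob P mu E1 <= chain_prob P mu E2.
Proof.
move=> E12; rewrite !chain_probE; apply: ler_sum => x _.
by apply: ler_wpM2l; [exact: pathw_ge0 | case: (E1 x) (E12 x) => // ->].
Qed.

Lemma chain_prob_union (I : finType) N (E : pred (N.-tuple Omega))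
    (B : I -> pred (N.-tuple Omega)) :
  (forall x, [forall i, ~~ B i x] -> E x) ->
  1 - \sum_i chain_prob P mu (B i) <= chain_prob P mu E.
Proof.
move=> noB_E; rewrite -(sum_pathw N).
have -> : \sum_i chain_prob P mu (B i) =
          \sum_(x : N.-tuple Omega) pathw P mu x * \sum_i (B i x)%:R.
  under eq_bigr do rewrite chain_probE.
  by rewrite exchange_big; apply: eq_bigr => x _; rewrite big_distrr.
rewrite chain_probE -sumrB; apply: ler_sum => x _.
rewrite -[X in X - _]mulr1 -mulrBr; apply: ler_wpM2l; first exact: pathw_ge0.
have [/noB_E -> | /forallPn[i]] := boolP [forall i, ~~ B i x].
  by rewrite gerBl sumr_ge0.
rewrite negbK => Bix; apply: (@le_trans _ _ 0); last by case: (E x).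
by rewrite subr_le0 (bigD1 i) //= Bix lerDl sumr_ge0.
Qed.

Lemma ler_iidE n h1 h2 :
  (forall s, size s = n -> h1 s <= h2 s) -> iidE n h1 <= iidE n h2.
Proof.
elim: n h1 h2 => [|n IH] h1 h2 le_h /=; first exact: le_h.
apply: ler_sum => a _; rewrite ler_wpM2l ?mu_distr.1 //.
by apply: IH => s s_n; apply: le_h => /=; rewrite s_n.
Qed.

Lemma iidE_cst n c : iidE n (fun _ => c) = c.
Proof. by elim: n => [|n IH] //=; under eq_bigr do rewrite IH; rewrite sum_mu_mul. Qed.

Lemma iidE_ge0 n h : (forall s, 0 <= h s) -> 0 <= iidE n h.
Proof. by move=> h_ge0; rewrite -(iidE_cst n 0); apply: ler_iidE. Qed.

Lemma iidE_le1 n h : (forall s, h s <= 1) -> iidE n h <= 1.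
Proof. by move=> h_le1; rewrite -(iidE_cst n 1); apply: ler_iidE. Qed.

Lemma iidEZ n c h : iidE n (fun s => c * h s) = c * iidE n h.
Proof.
elim: n h => [|n IH] h //=; rewrite big_distrr; apply: eq_bigr => a _.
by rewrite IH mulrCA.
Qed.

Lemma iidED n h1 h2 : iidE n (fun s => h1 s + h2 s) = iidE n h1 + iidE n h2.
Proof.
elim: n h1 h2 => [|n IH] h1 h2 //=; rewrite -big_split; apply: eq_bigr => a _.
by rewrite IH mulrDr.
Qed.

Lemma iidEB n h1 h2 : iidE n (fun s => h1 s - h2 s) = iidE n h1 - iidE n h2.
Proof.
elim: n h1 h2 => [|n IH] h1 h2 //=; rewrite -sumrB; apply: eq_bigr => a _.
by rewrite IH mulrBr.
Qed.

Lemma norm_iidE_le n c h : (forall s, `|h s| <= c) -> `|iidE n h| <= c.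
Proof.
move=> h_le; rewrite ler_norml; apply/andP; split.
  rewrite -(iidE_cst n (- c)) ler_iidE // => s _.
  by have := h_le s; rewrite ler_norml => /andP[].
rewrite -(iidE_cst n c) ler_iidE // => s _.
by have := h_le s; rewrite ler_norml => /andP[].
Qed.

Lemma iidE_sum n (F : Omega -> seq Omega -> R) :
  iidE n (fun s => \sum_a F a s) = \sum_a iidE n (F a).
Proof.
elim: n F => [|n IH] F //=.
under eq_bigr do rewrite (IH (fun a s => F a (_ :: s))) big_distrr.
by rewrite exchange_big.
Qed.

(** * Decoupling a strided subsequence *)

Lemma Pn_ge0 s z y : 0 <= Pn P s z y.
Proof.
elim: s z y => [|s IH] z y /=; first by case: (z == y).
by apply: sumr_ge0 => x _; rewrite mulr_ge0 ?P_stoch.1.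
Qed.

Lemma sum_Pn s z : \sum_y Pn P s z y = 1.
Proof.
elim: s z => [|s IH] z /=.
  by rewrite (bigD1 z) //= eqxx big1 ?addr0 // => y /negbTE; rewrite eq_sym => ->.
rewrite exchange_big /=.
by under eq_bigr do rewrite -big_distrr /= P_stoch.2 mulr1.
Qed.

Lemma tv_distC (p q : Omega -> R) : tv_dist p q = tv_dist q p.
Proof.
apply: eq_bigr => A _; rewrite -normrN -sumrN.
by congr `|_|; apply: eq_bigr => x _; rewrite opprB.
Qed.

Lemma norm_sum_mul_le_tv_dist (p q phi : Omega -> R) :
  (forall x, 0 <= phi x <= 1) -> `|\sum_x (p x - q x) * phi x| <= tv_dist p q.
Proof.
move=> phi01.
have sum_le (p' q' : Omega -> R) : \sum_x (p' x - q' x) * phi x <= tv_dist p' q'.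
  pose A := [set y | q' y < p' y].
  apply: (@le_trans _ _ (\sum_(x in A) (p' x - q' x))).
    rewrite [X in _ <= X]big_mkcond; apply: ler_sum => x _; rewrite inE.
    have /andP[phi_ge0 phi_le1] := phi01 x.
    case: ltrP => [qp | pq]; first by rewrite ler_piMr // subr_ge0 ltW.
    by rewrite mulr_le0_ge0 // subr_le0.
  apply: le_trans (ler_norm _) _; rewrite /tv_dist.
  exact: (le_bigmax _ (fun B : {set Omega} => `|\sum_(x in B) (p' x - q' x)|)).
rewrite ler_norml sum_le andbT lerNl -sumrN tv_distC.
by apply: le_trans (sum_le q p); apply: ler_sum => x _; rewrite -mulNr opprB.
Qed.

Lemma tv_dist_le_dmix s z : tv_dist (Pn P s z) mu <= dmix P mu s.
Proof. exact: (le_bigmax _ (fun z => tv_dist (Pn P s z) mu)). Qed.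

Section Stride.
Variables (k : nat) (x0 : Omega).

(* [stride n s = [:: s_0; s_K; ...; s_((n-1)K)]] and [strideE n z h] is the
   expectation of [h (z_(1+K), z_(1+2K), ..., z_(1+nK))] given [z_1 = z],
   where [K = k.+1]. *)
Fixpoint stride n (s : seq Omega) : seq Omega :=
  if n is n'.+1 then head x0 s :: stride n' (drop k.+1 s) else [::].

Fixpoint strideE n z h : R :=
  if n is n'.+1 then \sum_a Pn P k.+1 z a * strideE n' a (fun s => h (a :: s))
  else h [::].

Lemma chainE_stride n e z h :
  chainE (n * k.+1 + e) z (fun s => h (stride n (drop k s))) = strideE n z h.
Proof.
elim: n z h => [|n IH] z h; first by rewrite mul0n add0n /= chainE_cst.
rewrite mulSn -addnA chainE_cat.
transitivity (chainE k.+1 z (fun u => strideE n (last z u) (fun s => h (last z u :: s)))).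
  apply: eq_chainE => u; rewrite -IH; case/lastP: u => [|u y] //.
  rewrite size_rcons => -[u_k]; apply: eq_chainE => v _; congr h.
  by rewrite -cats1 -catA drop_size_cat //= last_cat.
exact: (chainE_last _ _ (fun y => strideE n y (fun s => h (y :: s)))).
Qed.

Lemma strideE_iidE n z h : (forall s, 0 <= h s <= 1) ->
  `|strideE n z h - iidE n h| <= n%:R * dmix P mu k.+1.
Proof.
elim: n z h => [|n IH] z h h01 /=; first by rewrite subrr normr0 mul0r.
set hE := fun a => iidE n (fun s => h (a :: s)).
have -> : \sum_a Pn P k.+1 z a * strideE n a (fun s => h (a :: s)) - \sum_a mu a * hE a =
    \sum_a Pn P k.+1 z a * (strideE n a (fun s => h (a :: s)) - hE a)
    + \sum_a (Pn P k.+1 z a - mu a) * hE a.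
  by rewrite -big_split -sumrB; apply: eq_bigr => a _ /=; ring.
rewrite mulrSr mulrDl mul1r (le_trans (ler_normD _ _)) // lerD //.
  apply: le_trans (ler_norm_sum _ _ _) _.
  apply: (@le_trans _ _ (\sum_a Pn P k.+1 z a * (n%:R * dmix P mu k.+1))).
    apply: ler_sum => a _; rewrite normrM ger0_norm ?Pn_ge0 // ler_wpM2l ?Pn_ge0 //.
    by apply: IH => s; exact: h01.
  by rewrite -big_distrl sum_Pn /= mul1r.
apply: le_trans (norm_sum_mul_le_tv_dist _ _ _) (tv_dist_le_dmix _ _) => a.
by rewrite iidE_ge0 ?iidE_le1 // => s; have /andP[] := h01 (a :: s).
Qed.

Lemma statE_stride_le N j n h :
  (j + n * k.+1 < N)%N -> (forall s, 0 <= h s <= 1) ->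
  statE N (fun s => h (stride n.+1 (drop j s))) <= iidE n.+1 h + n%:R * dmix P mu k.+1.
Proof.
move=> jnN h01.
have -> : N = (j + (n * k.+1 + (N - j - n * k.+1).-1).+1)%N by lia.
rewrite (statE_drop _ _ (fun s => h (stride n.+1 s))) /= -lerBlDl -sumrB.
under eq_bigr do rewrite (chainE_stride _ _ _ (fun t => h (_ :: t))) -mulrBr.
rewrite -[X in _ <= X]sum_mu_mul ler_sum // => a _.
by rewrite ler_wpM2l ?mu_distr.1 // (le_trans (ler_norm _)) ?strideE_iidE.
Qed.

Lemma big_stride (V : nmodType) (F : Omega -> V) n s :
  \sum_(y <- stride n s) F y = \sum_(i < n) F (nth x0 s (i * k.+1)).
Proof.
elim: n s => [|n IH] s /=; first by rewrite big_nil big_ord0.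
rewrite big_cons big_ord_recl /= IH nth0; congr (_ + _); apply: eq_bigr => i _.
by rewrite nth_drop mulSn.
Qed.

Lemma sum_nth_strides (V : nmodType) (F : Omega -> V) n N s : (n * k.+1 <= N)%N ->
  \sum_(i < N) F (nth x0 s i) =
  \sum_(j < k.+1) \sum_(y <- stride n (drop j s)) F y
  + \sum_(n * k.+1 <= i < N) F (nth x0 s i).
Proof.
move=> nkN; rewrite -(big_mkord xpredT (fun i => F (nth x0 s i))).
rewrite (big_cat_nat (leq0n _) nkN) big_nat_mul_blocks; congr (_ + _).
by apply: eq_bigr => j _; rewrite big_stride; apply: eq_bigr => i _; rewrite nth_drop.
Qed.

End Stride.

(** * McDiarmid's inequality *)

Lemma sum_mu_expR_le (phi : Omega -> R) c lam :
  0 <= lam -> lam * c <= 1 -> \sum_a mu a * phi a = 0 -> (forall a, `|phi a| <= c) ->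
  \sum_a mu a * expR (lam * phi a) <= expR (2 * lam ^+ 2 * c ^+ 2).
Proof.
move=> lam_ge0 lamc_le1 phi_mean0 phi_le.
apply: (@le_trans _ _ (\sum_a mu a * (1 + lam * phi a + 2 * (lam ^+ 2 * c ^+ 2)))).
  apply: ler_sum => a _; rewrite ler_wpM2l ?mu_distr.1 //.
  have lam_phi_le1 : `|lam * phi a| <= 1.
    by rewrite normrM ger0_norm // (le_trans _ lamc_le1) // ler_wpM2l.
  rewrite (le_trans (expR_le_1Dx_sqr lam_phi_le1)) // lerD2l ler_wpM2l // exprMn.
  rewrite ler_wpM2l ?exprn_ge0 // -real_normK ?num_real // lerXn2r ?nnegrE //.
  exact: le_trans (normr_ge0 _) (phi_le a).
under eq_bigr do rewrite !mulrDr mulr1 mulrCA.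
rewrite !big_split /= -big_distrr /= phi_mean0 mulr0 addr0 mu_distr.2 sum_mu_mul.
by rewrite mulrA (le_trans _ (expR_ge1Dx _)).
Qed.

Definition bounded_diff c h := forall u a b v, `|h (u ++ a :: v) - h (u ++ b :: v)| <= c.

Lemma bounded_diff_cons c h a : bounded_diff c h -> bounded_diff c (fun s => h (a :: s)).
Proof. by move=> h_bd u; apply: (h_bd (a :: u)). Qed.

Lemma bounded_diff_iidE_cons n c h a b : bounded_diff c h ->
  `|iidE n (fun s => h (a :: s)) - iidE n (fun s => h (b :: s))| <= c.
Proof.
by move=> h_bd; rewrite -iidEB norm_iidE_le // => s; exact: (h_bd [::]).
Qed.

(* McDiarmid's argument: condition on the first coordinate and induct on [n]. *)
Lemma iidE_expR_dev_le n c h lam : bounded_diff c h -> 0 <= lam -> lam * c <= 1 ->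
  iidE n (fun s => expR (lam * (h s - iidE n h))) <= expR (2 * lam ^+ 2 * c ^+ 2 * n%:R).
Proof.
elim: n h => [|n IH] h h_bd lam_ge0 lamc_le1 /=; first by rewrite subrr !mulr0 expR0.
set hE := fun a => iidE n (fun s => h (a :: s)).
set M := \sum_a mu a * hE a.
apply: (@le_trans _ _ (\sum_a mu a * (expR (2 * lam ^+ 2 * c ^+ 2 * n%:R)
                                       * expR (lam * (hE a - M))))).
  apply: ler_sum => a _; rewrite ler_wpM2l ?mu_distr.1 //.
  under eq_fun do rewrite -[h _ - M](subrKA (hE a)) mulrDr expRD mulrC.
  rewrite iidEZ [X in _ <= X]mulrC ler_wpM2l ?expR_ge0 //.
  by apply: IH => //; exact: bounded_diff_cons.
under eq_bigr do rewrite mulrCA.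
rewrite -big_distrr /= -(addn1 n) natrD mulrDr mulr1 expRD ler_wpM2l ?expR_ge0 //.
apply: sum_mu_expR_le => //.
  by under eq_bigr do rewrite mulrBr; rewrite sumrB sum_mu_mul subrr.
move=> a; rewrite /M -[hE a]sum_mu_mul -sumrB.
under eq_bigr do rewrite -mulrBr.
rewrite (le_trans (ler_norm_sum _ _ _)) // -[X in _ <= X]sum_mu_mul ler_sum // => b _.
by rewrite normrM ger0_norm ?mu_distr.1 // ler_wpM2l ?mu_distr.1 ?bounded_diff_iidE_cons.
Qed.

Lemma iidE_tail_le n h (c lam t : R) : bounded_diff c h -> 0 <= lam -> lam * c <= 1 ->
  iidE n (fun s => ((iidE n h + t < h s)%R)%:R)
  <= expR (- (lam * t) + 2 * lam ^+ 2 * c ^+ 2 * n%:R).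
Proof.
move=> h_bd lam_ge0 lamc_le1; rewrite expRD.
apply: (@le_trans _ _
  (expR (- (lam * t)) * iidE n (fun s => expR (lam * (h s - iidE n h))))).
  rewrite -iidEZ ler_iidE // => s _ /=; rewrite -expRD.
  case: ltrP => [t_lt | _]; last by rewrite expR_ge0.
  by rewrite (le_trans _ (expR_ge1Dx _)) // lerDl -mulrN -mulrDr mulr_ge0 //; lra.
by rewrite ler_wpM2l ?expR_ge0 ?iidE_expR_dev_le.
Qed.

(** * Sums of centred bounded vectors *)

Section VectorSums.
Variables (x0 : Omega) (d : nat) (Y : Omega -> 'rV[R]_d) (c : R).
Hypotheses (Y_mean0 : \sum_a mu a *: Y a = 0) (Y_diff : forall a b, enorm (Y a - Y b) <= c).

Definition sumY (s : seq Omega) := \sum_(y <- s) Y y.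

Lemma Y_diff_ge0 : 0 <= c.
Proof. exact: le_trans (enorm_ge0 _) (Y_diff x0 x0). Qed.

Lemma enorm_Y_le a : enorm (Y a) <= c.
Proof.
have -> : Y a = \sum_b mu b *: (Y a - Y b).
  under eq_bigr do rewrite scalerBr.
  by rewrite sumrB -scaler_suml mu_distr.2 scale1r Y_mean0 subr0.
rewrite (le_trans (ler_enorm_sum _ _)) // -[X in _ <= X]sum_mu_mul ler_sum // => b _.
by rewrite enormZ ger0_norm ?mu_distr.1 // ler_wpM2l ?mu_distr.1.
Qed.

Lemma enorm_sumY_le s : enorm (sumY s) <= (size s)%:R * c.
Proof.
rewrite (le_trans (ler_enorm_sum _ _)) //.
elim: s => [|a s IH]; first by rewrite big_nil mul0r.
by rewrite big_cons /= -addn1 natrD mulrDl mul1r addrC lerD ?enorm_Y_le.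
Qed.

Lemma sum_mu_dot_Y v : \sum_a mu a * dot (Y a) v = 0.
Proof. by under eq_bigr do rewrite -dotZl; rewrite -dot_suml Y_mean0 dot0l. Qed.

Lemma iidE_dot_sumY n : iidE n (fun s => dot (sumY s) (sumY s)) <= n%:R * c ^+ 2.
Proof.
elim: n => [|n IH] /=; first by rewrite /sumY big_nil dot0l mul0r.
have dot_cons a s : dot (sumY (a :: s)) (sumY (a :: s)) =
    dot (Y a) (Y a) + 2 * dot (Y a) (sumY s) + dot (sumY s) (sumY s).
  by rewrite /sumY big_cons dotDl !dotDr (dotC _ (Y a)); ring.
under eq_bigr do rewrite (eq_fun (dot_cons _)) !iidED iidE_cst iidEZ !mulrDr.
have cross : \sum_a mu a * (2 * iidE n (fun s => dot (Y a) (sumY s))) = 0.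
  under eq_bigr do rewrite mulrCA -iidEZ.
  rewrite -big_distrr -iidE_sum /=.
  by under eq_fun do rewrite sum_mu_dot_Y; rewrite iidE_cst mulr0.
rewrite !big_split /= cross addr0 sum_mu_mul -(addn1 n) natrD mulrDl mul1r addrC lerD //.
rewrite -[X in _ <= X]sum_mu_mul ler_sum // => a _.
rewrite ler_wpM2l ?mu_distr.1 // -enorm_sqr lerXn2r ?nnegrE ?enorm_ge0 ?Y_diff_ge0 //.
exact: enorm_Y_le.
Qed.

Lemma iidE_enorm_sumY n : iidE n (fun s => enorm (sumY s)) <= c * Num.sqrt n%:R.
Proof.
set q := Num.sqrt n%:R; have q_ge0 : 0 <= q := sqrtr_ge0 _.
have qq : q ^+ 2 = n%:R by rewrite sqr_sqrtr.
have c_ge0 := Y_diff_ge0.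
have [/andP[c_gt0 q_gt0] | small] := boolP ((0 < c) && (0 < q)).
  have cq_gt0 : 0 < c * q by rewrite mulr_gt0.
  (* AM-GM with weight [c q]: [|S| <= |S|^2 / (2 c q) + c q / 2] *)
  apply: (@le_trans _ _
    (iidE n (fun s => (2 * (c * q))^-1 * dot (sumY s) (sumY s) + c * q / 2))).
    rewrite ler_iidE // => s _; rewrite -enorm_sqr; set x := enorm _.
    have -> : (2 * (c * q))^-1 * x ^+ 2 + c * q / 2 = x + (x - c * q) ^+ 2 / (2 * (c * q)).
      by field; rewrite !gt_eqF.
    by rewrite lerDl divr_ge0 ?sqr_ge0 // mulr_ge0 // ltW.
  rewrite iidED (iidEZ _ _ (fun s => dot (sumY s) (sumY s))) iidE_cst.
  apply: (@le_trans _ _ ((2 * (c * q))^-1 * (n%:R * c ^+ 2) + c * q / 2)).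
    by rewrite lerD2r ler_wpM2l ?iidE_dot_sumY // invr_ge0 mulr_ge0 // ltW.
  rewrite -qq (_ : _ + _ = c * q) //.
  by field; rewrite !gt_eqF.
rewrite -(iidE_cst n (c * q)) ler_iidE // => s s_n.
rewrite (le_trans (enorm_sumY_le s)) // s_n -qq.
move: small; rewrite negb_and -!leNgt => /orP[c_le0 | q_le0].
  have -> : c = 0 by lra.
  by rewrite mulr0 mul0r.
have -> : q = 0 by lra.
by rewrite expr0n mul0r mulr0.
Qed.

Lemma bounded_diff_enorm_sumY : bounded_diff c (fun s => enorm (sumY s)).
Proof.
move=> u a b v; rewrite (le_trans (norm_enormB _ _)) // /sumY !big_cat !big_cons /=.
have -> : \sum_(y <- u) Y y + (Y a + \sum_(y <- v) Y y)
          - (\sum_(y <- u) Y y + (Y b + \sum_(y <- v) Y y)) = Y a - Y b.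
  by rewrite opprD addrACA subrr add0r opprD addrACA subrr addr0.
exact: Y_diff.
Qed.

(* The mean bound gives the [c sqrt n] term and McDiarmid's inequality with
   [lam = r / (c sqrt n)] the [3 r c sqrt n] term; if [c = 0], [n = 0] or
   [r > sqrt n] the event is empty. *)
Lemma iidE_enorm_sumY_tail n r : 0 <= r ->
  iidE n (fun s => ((c * Num.sqrt n%:R * (1 + 3 * r) < enorm (sumY s))%R)%:R)
  <= expR (- r ^+ 2).
Proof.
move=> r_ge0; set q := Num.sqrt n%:R; have q_ge0 : 0 <= q := sqrtr_ge0 _.
have qq : q ^+ 2 = n%:R by rewrite sqr_sqrtr.
have c_ge0 := Y_diff_ge0.
have [/and3P[c_gt0 q_gt0 r_le_q] | large] := boolP [&& 0 < c, 0 < q & r <= q].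
  set lam := r / (c * q).
  have lam_ge0 : 0 <= lam by rewrite divr_ge0 // mulr_ge0.
  have lamc_le1 : lam * c <= 1.
    by rewrite /lam mulrAC invfM mulrA mulfK ?gt_eqF // ler_pdivrMr // mul1r.
  have := iidE_tail_le n (3 * c * r * q) bounded_diff_enorm_sumY lam_ge0 lamc_le1.
  have -> : - (lam * (3 * c * r * q)) + 2 * lam ^+ 2 * c ^+ 2 * n%:R = - r ^+ 2.
    by rewrite /lam -qq; field; rewrite !gt_eqF.
  apply: le_trans; rewrite ler_iidE // => s _.
  have [T_lt | _] := ltrP (c * q * (1 + 3 * r)) (enorm (sumY s)); last by rewrite ler_nat.
  suff -> : (iidE n (fun s => enorm (sumY s)) + 3 * c * r * q < enorm (sumY s))%R by [].
  by apply: le_lt_trans T_lt; have := iidE_enorm_sumY n; rewrite -/q; lra.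
apply: le_trans (expR_ge0 _); rewrite -(iidE_cst n 0) ler_iidE // => s s_n.
suff /negbTE -> : ~~ (c * q * (1 + 3 * r) < enorm (sumY s)) by [].
rewrite -leNgt (le_trans (enorm_sumY_le s)) // s_n -qq.
have qc_ge0 : 0 <= q * c by rewrite mulr_ge0.
by move: large; rewrite !negb_and -!leNgt -ltNge => /or3P[] ?; nra.
Qed.

Lemma chain_prob_stride_tail N k j n r : (j + n * k.+1 < N)%N -> 0 <= r ->
  chain_prob P mu (fun x : N.-tuple Omega =>
    (c * Num.sqrt n.+1%:R * (1 + 3 * r) < enorm (sumY (stride k x0 n.+1 (drop j x))))%R)
  <= expR (- r ^+ 2) + n%:R * dmix P mu k.+1.
Proof.
move=> jnN r_ge0; set T := c * _ * _.
pose h (t : seq Omega) : R := ((T < enorm (sumY t))%R)%:R.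
rewrite chain_probE (sum_pathw_statE _ (fun s => h (stride k x0 n.+1 (drop j s)))).
rewrite (le_trans (statE_stride_le x0 (h := h) jnN _)) ?lerD2r ?iidE_enorm_sumY_tail //.
by move=> s; rewrite /h; case: (_ < _)%R; rewrite ?lexx ?ler01.
Qed.

Lemma enorm_sum_le_strides N k n (x : N.-tuple Omega) T : (n * k.+1 <= N)%N ->
  (forall j : 'I_k.+1, enorm (sumY (stride k x0 n (drop j x))) <= T) ->
  enorm (\sum_(i < N) Y (tnth x i)) <= k.+1%:R * T + (N - n * k.+1)%:R * c.
Proof.
move=> nkN T_ge.
rewrite (eq_bigr (fun i : 'I_N => Y (nth x0 x i))) => [|i _]; last by rewrite (tnth_nth x0).
rewrite (sum_nth_strides x0 _ _ nkN) (le_trans (ler_enormD _ _)) // lerD //.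
  rewrite (le_trans (ler_enorm_sum _ _)) // (le_trans (ler_sum _ (fun j _ => T_ge j))) //.
  by rewrite sumr_const card_ord mulr_natl.
rewrite (le_trans (ler_enorm_sum _ _)) //.
rewrite (le_trans (ler_sum _ (fun i _ => enorm_Y_le _))) //.
by rewrite sumr_const_nat mulr_natl.
Qed.

Lemma chain_prob_block_sums N k n r : (n.+1 * k.+1 <= N)%N -> 0 <= r ->
  1 - k.+1%:R * (expR (- r ^+ 2) + n%:R * dmix P mu k.+1) <=
  chain_prob P mu (fun x : N.-tuple Omega => enorm (\sum_(i < N) Y (tnth x i))
    <= k.+1%:R * (c * Num.sqrt n.+1%:R * (1 + 3 * r)) + (N - n.+1 * k.+1)%:R * c).
Proof.
move=> nkN r_ge0; set T := c * _ * _.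
pose bad (j : 'I_k.+1) (x : N.-tuple Omega) :=
  (T < enorm (sumY (stride k x0 n.+1 (drop j x))))%R.
apply: le_trans (chain_prob_union (B := bad) _); last first.
  move=> x /forallP no_bad; apply: enorm_sum_le_strides => // j.
  by rewrite leNgt; exact: no_bad.
rewrite lerD2l lerN2 mulr_natl -[X in _ *+ X](card_ord k.+1) -sumr_const ler_sum // => j _.
apply: chain_prob_stride_tail => //.
by have := ltn_ord j; nia.
Qed.

Lemma chain_prob_mean_dev N K r : (1 <= K <= N)%N -> 0 <= r ->
  1 - K%:R * (expR (- r ^+ 2) + (N %/ K).-1%:R * dmix P mu K) <=
  chain_prob P mu (fun x : N.-tuple Omega =>
    enorm (N%:R^-1 *: \sum_(i < N) Y (tnth x i))
    <= 3 * c / Num.sqrt (N %/ K)%:R * (1 + r) + c * K%:R / N%:R).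
Proof.
case/andP=> K_gt0 KN r_ge0.
have [k Kk] : exists k, K = k.+1 by exists K.-1; rewrite prednK.
subst K.
have [n nE] : exists n, (N %/ k.+1)%N = n.+1.
  by exists (N %/ k.+1).-1; rewrite prednK // divn_gt0.
have nK_bnd : (n.+1 * k.+1 <= N < n.+2 * k.+1)%N by rewrite -nE leq_trunc_div ltn_ceil.
rewrite nE /=; apply: le_trans (chain_prob_block_sums _ r_ge0) (le_chain_prob _) => [|x].
  by case/andP: nK_bnd.
rewrite enormZ ger0_norm ?invr_ge0 ?ler0n // => sum_le.
rewrite (le_trans _ (block_average_le Y_diff_ge0 r_ge0 _ nK_bnd)) //.
by rewrite ler_wpM2l ?invr_ge0 ?ler0n.
Qed.

End VectorSums.
End MarkovChain.

Unset Implicit Arguments.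

Theorem lemmaA3 (R : realType) (Omega : finType) (d : nat)
  (Kset : set 'rV[R]_d) (f : 'rV[R]_d -> Omega -> R)
  (P : Omega -> Omega -> R) (mu : Omega -> R) (G : R)
  (N K : nat) (delta : R) (w : 'rV[R]_d) :
  (forall z x, differentiable (fun v => f v z) x) ->
  is_stochastic P -> is_distribution mu -> is_stationary P mu ->
  (forall v z, Kset v -> enorm (grad (fun u => f u z) v) <= G) ->
  (1 <= K <= N)%N ->
  let n := (N %/ K)%N in
  K%:R * (n.-1)%:R * dmix P mu K < delta ->
  Kset w ->
  let F := fun v => \sum_(z : Omega) mu z * f v z in
  let delta' := delta - K%:R * (n.-1)%:R * dmix P mu K in
  let gN := fun x : N.-tuple Omega =>
      N%:R^-1 *: \sum_(i < N) grad (fun u => f u (tnth x i)) w in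
  1 - delta <=
  chain_prob P mu
    (fun x : N.-tuple Omega =>
       enorm (gN x - grad F w) <=
         6 * G / Num.sqrt n%:R * (1 + Num.sqrt (ln (K%:R / delta')))
         + 2 * G * K%:R / N%:R).
Proof.
move=> f_diff P_stoch mu_distr mu_stat grad_le KN n dmix_lt w_K; cbv zeta.
set F := fun v : 'rV_d => _; set delta' := delta - K%:R * n.-1%:R * dmix P mu K.
have [x0] := distribution_inhabited mu_distr.
pose Y a := grad (fun u => f u a) w - grad F w.
have Y_mean0 : \sum_a mu a *: Y a = 0.
  under eq_bigr do rewrite scalerBr.
  by rewrite sumrB -scaler_suml mu_distr.2 scale1r -grad_sum_mul // subrr.
have Y_diff a b : enorm (Y a - Y b) <= 2 * G.
  rewrite /Y opprB addrA subrK (le_trans (ler_enormD _ _)) // enormN.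
  by have := grad_le w a w_K; have := grad_le w b w_K; lra.
have K_gt0 : 0 < K%:R :> R by rewrite ltr0n; case/andP: KN.
have N_neq0 : N%:R != 0 :> R by rewrite pnatr_eq0 -lt0n; case/andP: KN => /leq_trans; apply.
have mean_dev := chain_prob_mean_dev P_stoch mu_distr mu_stat x0 Y_mean0 Y_diff KN
  (sqrtr_ge0 (ln (K%:R / delta'))).
apply: le_trans (le_trans mean_dev (le_chain_prob P_stoch mu_distr _)) => [|x].
  have delta'_gt0 : 0 < delta' by rewrite subr_gt0.
  have := expRN_sqr_sqrt_ln_le delta'_gt0 K_gt0.
  rewrite ler_pdivlMr // mulrC => Kexp_le.
  by rewrite lerD2l lerN2 mulrDr mulrA; rewrite /delta' in Kexp_le; lra.
have dev_eq : N%:R^-1 *: \sum_(i < N) grad (fun u => f u (tnth x i)) w - grad F w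
              = N%:R^-1 *: \sum_(i < N) Y (tnth x i).
  rewrite /Y sumrB sumr_const card_ord scalerBr -(scaler_nat N (grad F w)).
  by rewrite scalerA mulVf ?scale1r.
by rewrite dev_eq (_ : 6 * G = 3 * (2 * G)) //; ring.
Qed.
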